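(* Let $d$ be a positive integer and let $\mu$ be an isotropic Borel probability measure on $\mathbb{S}^{d-1}$ such that $\langle x,y\rangle\ge 0$ for all $x,y$ in the support of $\mu$. Then $\mu$ is the uniform distribution over an orthonormal basis, i.e. $\mu=\frac1d\sum_{j=1}^d\delta_{e_j}$ for some orthonormal basis $e_1,\dots,e_d$ of $\mathbb{R}^d$.
   Context: A Borel probability measure $\mu$ on $\mathbb{S}^{d-1}$ is isotropic if $\int_{\mathbb{S}^{d-1}}xx^T\,d\mu(x)=\frac1d I_d$, equivalently $\int\langle x,y\rangle^2\,d\mu(x)=\frac1d$ for every $y\in\mathbb{S}^{d-1}$. *)

From HB Require Import structures.
From mathcomp Require Import all_boot all_order all_algebra.
From mathcomp Require Import all_classical all_reals all_analysis.
Set Implicit Arguments. Unset Strict Implicit. Unset Printing Implicit Defensive.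
Import Order.TTheory GRing.Theory Num.Theory.
Import numFieldNormedType.Exports.
Local Open Scope classical_set_scope.
Local Open Scope ring_scope.

(* R^d is represented as row vectors 'rV[R]_d with the product (= Euclidean) topology *)

Definition dotv (R : realType) (d : nat) (x y : 'rV[R]_d) : R := (x *m y^T) 0 0.

Definition sphere (R : realType) (d : nat) : set 'rV[R]_d :=
  [set x | dotv x x = 1].

Definition BorelRd (R : realType) (d : nat) :=
  g_sigma_algebraType (open : set (set 'rV[R]_d)).

Definition msupport (R : realType) (d : nat)
  (mu : set (BorelRd R d) -> \bar R) : set 'rV[R]_d :=
  [set x | forall U : set 'rV[R]_d, open U -> U x -> (0 < mu U)%E].

Definition isotropic (R : realType) (d : nat)
  (mu : {measure set (BorelRd R d) -> \bar R}) : Prop :=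
  forall y : 'rV[R]_d, sphere y ->
    (\int[mu]_x ((dotv (x : 'rV[R]_d) y) ^+ 2)%:E = (d%:R^-1)%:E)%E.

From HB Require Import structures.
From mathcomp Require Import finmap.
From mathcomp Require Import all_boot all_order all_algebra.
From mathcomp Require Import all_classical all_reals all_analysis.
From mathcomp Require Import measurable_realfun ring lra.
Set Implicit Arguments. Unset Strict Implicit. Unset Printing Implicit Defensive.
Import Order.TTheory GRing.Theory Num.Theory.
Import numFieldNormedType.Exports.
Local Open Scope classical_set_scope.
Local Open Scope ring_scope.

(* Let S be the support of mu: it is closed, lies on the sphere and carries all
   of mu, so every continuous function is integrable on it, and a continuous
   function that is nonnegative on S with nonpositive integral vanishes on S.
   Write E for integration over S and m for the mean of mu.  On S we have
   0 <= <z,x> <= 1, hence for x in S, <x,m> = E <z,x> >= E <z,x>^2 = 1/d, while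
   E <x,m> = |m|^2 <= 1/d by isotropy and nonnegativity of the variance of
   <z,m>; thus <x,m> = 1/d on S.  Then z |-> <z,x> - <z,x>^2 is nonnegative on S
   with integral <x,m> - 1/d = 0, so distinct points of S are orthogonal.
   Consequently mu {x} = E <z,x>^2 = 1/d for x in S, and S consists of exactly
   d orthonormal points of mass 1/d. *)

Section dotv.
Variables (R : realType) (d : nat).
Implicit Types x y z : 'rV[R]_d.

Lemma dotvE x y : dotv x y = \sum_i x 0 i * y 0 i.
Proof. by rewrite /dotv mxE; apply: eq_bigr => i _; rewrite mxE. Qed.

Lemma dotvC x y : dotv x y = dotv y x.
Proof. by rewrite !dotvE; apply: eq_bigr => i _; rewrite mulrC. Qed.

Lemma dotvBl x y z : dotv (x - y) z = dotv x z - dotv y z.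
Proof.
by rewrite !dotvE -sumrB; apply: eq_bigr => i _; rewrite !mxE mulrBl.
Qed.

Lemma dotvBr x y z : dotv x (y - z) = dotv x y - dotv x z.
Proof. by rewrite !(dotvC x) dotvBl. Qed.

Lemma dotvZl a x y : dotv (a *: x) y = a * dotv x y.
Proof. by rewrite !dotvE mulr_sumr; apply: eq_bigr => i _; rewrite mxE mulrA. Qed.

Lemma dotvZr a x y : dotv x (a *: y) = a * dotv x y.
Proof. by rewrite dotvC dotvZl dotvC. Qed.

Lemma dotvv_ge0 x : 0 <= dotv x x.
Proof. by rewrite dotvE; apply: sumr_ge0 => i _; rewrite -expr2 sqr_ge0. Qed.

Lemma dotvv_eq0 x : (dotv x x == 0) = (x == 0).
Proof.
apply/idP/eqP => [|->]; last by rewrite dotvE big1 // => i _; rewrite mxE mul0r.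
rewrite dotvE psumr_eq0 => [/allP x0|i _]; last by rewrite -expr2 sqr_ge0.
apply/rowP => i; have := x0 i (mem_index_enum i).
by rewrite -expr2 sqrf_eq0 mxE => /eqP.
Qed.

Lemma sphere_norm_coord_le1 x i : sphere x -> `|x 0 i| <= 1.
Proof.
rewrite /sphere /= dotvE => x1; rewrite -(expr_le1 (n := 2)) // real_normK ?num_real //.
by rewrite -x1 (bigD1 i) //= expr2 lerDl sumr_ge0 // => j _; rewrite -expr2 sqr_ge0.
Qed.

Lemma sphere_dotvBB x y : sphere x -> sphere y -> dotv (x - y) (x - y) = 2 - 2 * dotv x y.
Proof. by move=> x1 y1; rewrite dotvBl !dotvBr x1 y1 (dotvC y x); ring. Qed.

Lemma sphere_dotv_le1 x y : sphere x -> sphere y -> dotv x y <= 1.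
Proof. by move=> x1 y1; have := dotvv_ge0 (x - y); rewrite sphere_dotvBB //; lra. Qed.

Lemma sphere_dotv_eq1 x y : sphere x -> sphere y -> dotv x y = 1 -> x = y.
Proof.
move=> x1 y1 xy1; apply/eqP; rewrite -subr_eq0 -dotvv_eq0.
by rewrite sphere_dotvBB // xy1 mulr1 subrr.
Qed.

End dotv.

Section real_continuity.
Variables (R : realType) (T : topologicalType).
Implicit Types f g : T -> R.

Lemma continuous_sub f g : continuous f -> continuous g -> continuous (fun t => f t - g t).
Proof. by move=> cf cg t; exact: (continuousB (cf t) (cg t)). Qed.

Lemma continuous_mul f g : continuous f -> continuous g -> continuous (fun t => f t * g t).
Proof. by move=> cf cg t; exact: (continuousM (cf t) (cg t)). Qed.

Lemma continuous_sqr f : continuous f -> continuous (fun t => f t ^+ 2).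
Proof. by move=> cf; exact: continuous_mul. Qed.

Lemma continuous_sum (I : Type) (r : seq I) (F : I -> T -> R) :
  (forall i, continuous (F i)) -> continuous (fun t => \sum_(i <- r) F i t).
Proof.
move=> cF; elim: r => [|i r IHr].
  under eq_fun do rewrite big_nil.
  exact: cst_continuous.
under eq_fun do rewrite big_cons.
by move=> t; exact: (continuousD (cF i t) (IHr t)).
Qed.

End real_continuity.

Section dotv_continuity.
Variables (R : realType) (d : nat).

Lemma continuous_dotv (T : topologicalType) (f g : T -> 'rV[R]_d) :
  continuous f -> continuous g -> continuous (fun t => dotv (f t) (g t)).
Proof.
move=> cf cg; under eq_fun do rewrite dotvE.
have coord (h : T -> 'rV[R]_d) i : continuous h -> continuous (fun t => h t 0 i).
  by move=> ch t; apply: (@continuous_comp _ _ _ h (fun M : 'rV[R]_d => M 0 i));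
    [exact: ch | exact: coord_continuous].
by apply: continuous_sum => i; apply: continuous_mul; exact: coord.
Qed.

Lemma continuous_dotvl (y : 'rV[R]_d) : continuous (fun x => dotv x y).
Proof.
by apply: (@continuous_dotv _ id (fun=> y)) => t; [exact: cvg_id | exact: cst_continuous].
Qed.

Lemma closed_sphere : closed (sphere (R:=R) (d:=d)).
Proof.
rewrite (_ : sphere (R:=R) (d:=d) = (fun x : 'rV[R]_d => dotv x x) @^-1` [set 1]) //.
apply: preimage_closed; last exact: closed_eq.
by move=> x _; apply: (@continuous_dotv _ id id) => t; exact: cvg_id.
Qed.

Lemma bounded_sphere : bounded_set (sphere (R:=R) (d:=d)).
Proof.
exists 1; split; rewrite ?num_real // => M M1 x x1.
apply: le_trans (ltW M1); rewrite [leLHS]/Num.norm /= mx_normrE.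
apply: bigmax_le => // -[i j] _; rewrite (ord1 i).
exact: sphere_norm_coord_le1.
Qed.

Lemma compact_sphere : compact (sphere (R:=R) (d:=d)).
Proof. exact: bounded_closed_compact bounded_sphere closed_sphere. Qed.

End dotv_continuity.

Lemma fset_enum (T : choiceType) (B : {fset T}) :
  exists e : 'I_#|` B| -> T, injective e /\ range e = [set` B].
Proof.
exists (tnth (in_tuple B)); split; first exact/tuple_uniqP/fset_uniq.
apply/seteqP; split => [_ [i _ <-]|x Bx]; first exact: mem_tnth.
by have /tnthP[i ->] : x \in in_tuple B by []; exists i.
Qed.

Lemma measure_setI_range_atoms d' (T : measurableType d') (R : realType)
    (mu : {measure set T -> \bar R}) n (e : 'I_n -> T) (c : R) (A : set T) :
  measurable A -> injective e -> (forall i, measurable [set e i]) ->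
  (forall i, mu [set e i] = c%:E) ->
  mu (A `&` range e) = (\sum_(i < n) c%:E * \d_(e i) A)%E.
Proof.
move=> mA ie me ce.
have -> : A `&` range e = \big[setU/set0]_(i < n | e i \in A) [set e i].
  rewrite -bigcup_seq_cond; apply/seteqP; split => [x [Ax [i _ ix]]|_ [i /andP[_ Ai] ->]].
    exists i => //; apply/andP; split; [exact: mem_index_enum | rewrite ix; exact: mem_set].
  by split; [exact: set_mem | exists i].
rewrite measure_bigsetU_ord //; last first.
  by move=> i j _ _ [x [xi xj]]; apply: ie; rewrite -xi -xj.
rewrite big_mkcond; apply: eq_bigr => i _; rewrite diracE.
by case: (e i \in A); rewrite /= ?mule1 ?mule0 ?ce.
Qed.

Lemma Rintegral_sum d' (T : measurableType d') (R : realType) (mu : measure T R)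
    (D : set T) (I : Type) (r : seq I) (F : I -> T -> R) :
  measurable D -> (forall i, mu.-integrable D (EFin \o F i)) ->
  \int[mu]_(x in D) (\sum_(i <- r) F i x) = \sum_(i <- r) \int[mu]_(x in D) F i x.
Proof.
move=> mD iF; elim: r => [|i r IHr].
  under eq_Rintegral do rewrite big_nil.
  by rewrite Rintegral_cst // mul0r big_nil.
under eq_Rintegral do rewrite big_cons.
rewrite big_cons -IHr RintegralD //.
apply: (eq_integrable mD (fun x => \sum_(j <- r) (F j x)%:E)) => [x _|].
  by rewrite sumEFin.
exact: (integrable_sum (h := fun j x => (F j x)%:E) mD r (fun j _ => iF j)).
Qed.

Section borel_Rd.
Variables (R : realType) (d : nat).
Implicit Types U : set 'rV[R]_d.

Lemma open_measurableRd U : open U -> measurable (U : set (BorelRd R d)).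
Proof. exact: sub_sigma_algebra. Qed.

Lemma closed_measurableRd U : closed U -> measurable (U : set (BorelRd R d)).
Proof. by rewrite -openC => /open_measurableRd/measurableC; rewrite setCK. Qed.

Lemma finite_measurableRd U : finite_set U -> measurable (U : set (BorelRd R d)).
Proof.
move=> fU; apply: closed_measurableRd.
exact: accessible_finite_set_closed.1 (hausdorff_accessible (@norm_hausdorff _ _)) U fU.
Qed.

Lemma continuous_measurable_funRd (f : 'rV[R]_d -> R) :
  continuous f -> measurable_fun setT (f : BorelRd R d -> R).
Proof.
move=> /continuousP cf; apply: (measurability _ (RGenOpens.measurableE R)).
move=> _ [_ [a [b ->] <-]]; rewrite setTI.
by apply: open_measurableRd; exact/cf/interval_open.
Qed.

Lemma rat_ball_basis (x : 'rV[R]_d) U : open U -> U x ->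
  exists j : 'rV[rat]_d * nat,
    let B := ball (map_mx ratr j.1 : 'rV[R]_d) j.2.+1%:R^-1 in B x /\ B `<=` U.
Proof.
move=> oU Ux; have /nbhs_ballP[e /= e0 eU] := open_nbhs_nbhs (conj oU Ux).
have [n ne] : exists n : nat, n.+1%:R^-1 + n.+1%:R^-1 <= e :> R.
  have half a : a < e / 2 -> a + a <= e by lra.
  exists (Num.truncn (e / 2)^-1); apply: half.
  by rewrite -ltf_pV2 ?(posrE, divr_gt0) // invrK truncnS_gt.
have r0 : 0 < n.+1%:R^-1 :> R by [].
have /choice[q qx] i : exists q : rat, `|x 0 i - ratr q| < n.+1%:R^-1.
  have [a [xa [q _ qa]]] := dense_rat (ex_intro _ _ (ballxx (x 0 i) r0)) (ball_open _ _).
  by exists q; rewrite qa.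
pose B := ball (map_mx ratr (\row_i q i) : 'rV[R]_d) n.+1%:R^-1.
have Bx : B x.
  by split => // i k; rewrite !mxE (ord1 i); have := qx k; rewrite distrC.
exists (\row_i q i, n); split => // y By.
exact/eU/(le_ball ne (ball_triangle (ball_sym Bx) By)).
Qed.

End borel_Rd.

Section support.
Variables (R : realType) (d : nat) (mu : probability (BorelRd R d) R).
Local Notation S := (msupport mu).

Lemma not_msupportP (x : 'rV[R]_d) :
  ~ S x -> exists U : set 'rV[R]_d, [/\ open U, U x & mu U = 0%E].
Proof.
move=> /existsNP[U /not_implyP[oU /not_implyP[Ux /negP]]].
by rewrite -leNgt => U0; exists U; split => //; apply/eqP; rewrite eq_le U0 measure_ge0.
Qed.

Lemma closed_msupport : closed S.
Proof.
rewrite -openC; suff : [set A : set 'rV[R]_d | A `<=` A°] (~` S) by rewrite -openE.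
move=> x /not_msupportP[U [oU Ux U0]].
apply: filterS (open_nbhs_nbhs (conj oU Ux)) => y Uy Sy.
by have := Sy U oU Uy; rewrite U0 ltxx.
Qed.

Lemma measurable_msupport : measurable (S : set (BorelRd R d)).
Proof. exact: closed_measurableRd closed_msupport. Qed.

(* ~` S is covered by the null balls among the countably many rational balls. *)
Lemma measure_msupportC : mu (~` S) = 0%E.
Proof.
pose B (j : 'rV[rat]_d * nat) := ball (map_mx ratr j.1 : 'rV[R]_d) j.2.+1%:R^-1.
pose N k : set (BorelRd R d) :=
  [set x | exists j, [/\ unpickle k = Some j, mu (B j) = 0%E & B j x]].
have N0 k : mu.-negligible (N k).
  have [[j [kj Bj0]]|nj] := pselect (exists j, unpickle k = Some j /\ mu (B j) = 0%E).
    exists (B j); split => //; first exact: open_measurableRd (ball_open _ _).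
    by move=> x [j' []]; rewrite kj => -[<-].
  by exists set0; split => // x [j [kj Bj0 _]]; apply: nj; exists j.
apply/measure_negligible; first exact: measurableC measurable_msupport.
apply: negligibleS (negligible_bigcup N0) => x /not_msupportP[U [oU Ux U0]].
have [j [Bx BU]] := rat_ball_basis oU Ux.
exists (pickle j) => //; exists j; split => //; first exact: pickleK.
apply/eqP; rewrite eq_le measure_ge0 andbT -U0 le_measure ?inE //.
- exact: open_measurableRd (ball_open _ _).
- exact: open_measurableRd.
Qed.

Lemma measure_setI_msupport (A : set (BorelRd R d)) :
  measurable A -> mu (A `&` S) = mu A.
Proof.
move=> mA; have mS := measurable_msupport.
rewrite [RHS](measureDI mu mA mS) [X in (X + _)%E](_ : _ = 0%E) ?add0e //.
apply/eqP; rewrite eq_le measure_ge0 andbT -measure_msupportC.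
by rewrite le_measure ?inE //; [exact: measurableD | exact: measurableC].
Qed.

Lemma measure_msupport : mu S = 1%E.
Proof. by rewrite -[S]setTI measure_setI_msupport // probability_setT. Qed.

Lemma msupport_sub_closed (C : set 'rV[R]_d) : closed C -> mu C = 1%E -> S `<=` C.
Proof.
move=> cC C1 x Sx; apply: contrapT => Cx.
have := Sx _ (closed_openC cC) Cx.
by rewrite probability_setC ?C1 ?subee ?ltxx //; exact: closed_measurableRd.
Qed.

End support.

Section msupport_integral.
Variables (R : realType) (d : nat) (mu : probability (BorelRd R d) R).
Local Notation S := (msupport mu : set (BorelRd R d)).

Lemma integral_msupport (f : 'rV[R]_d -> R) : continuous f ->
  (\int[mu]_x (f x)%:E = \int[mu]_(x in S) (f x)%:E)%E.
Proof.
move=> cf; have mS := measurable_msupport mu.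
have mf : measurable_fun setT (EFin \o f : BorelRd R d -> \bar R).
  by apply/measurable_EFinP; exact: continuous_measurable_funRd.
rewrite -(setUv S) integral_setU //; last 3 first.
- exact: measurableC.
- exact: measurable_funS mf.
- by rewrite disj_set2E setICr.
rewrite [X in (_ + X)%E]null_set_integral ?adde0 //.
- exact: measurableC.
- exact: measurable_funS mf.
- exact: measure_msupportC.
Qed.

Lemma continuous_compact_integrableRd (K : set 'rV[R]_d) (f : 'rV[R]_d -> R) :
  compact K -> continuous f -> mu.-integrable (K : set (BorelRd R d)) (EFin \o f).
Proof.
move=> cK cf; have mK : measurable (K : set (BorelRd R d)).
  by apply: closed_measurableRd; exact: compact_closed (@norm_hausdorff _ _) cK.
apply: measurable_bounded_integrable => //.
- by rewrite (le_lt_trans (probability_le1 mu mK)) ?ltry.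
- exact: measurable_funS (continuous_measurable_funRd cf).
- have /compact_bounded[M [_ fM]] := continuous_compact (continuous_subspaceT cf) cK.
  by exists M; split; rewrite ?num_real // => N MN x Kx; apply: fM.
Qed.

Lemma msupport_Rintegral_le0_eq0 (h : 'rV[R]_d -> R) : continuous h ->
    mu.-integrable S (EFin \o h) -> (forall x, S x -> 0 <= h x) ->
  \int[mu]_(x in S) h x <= 0 -> forall x, S x -> h x = 0.
Proof.
move=> ch ih h0 Ih x Sx; apply/eqP; rewrite eq_le h0 // andbT leNgt; apply/negP => hx.
have mS := measurable_msupport mu.
(* h > h x / 2 on an open neighbourhood U of x, which has positive mass. *)
pose c := h x / 2; have c0 : 0 < c by rewrite divr_gt0.
pose U := h @^-1` [set r | c < r].
have oU : open U by move/continuousP: ch; apply; exact: open_gt.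
have mU : measurable (U : set (BorelRd R d)) := open_measurableRd oU.
have mUS : measurable (U `&` S : set (BorelRd R d)) by exact: measurableI.
have mh : measurable_fun setT (EFin \o h : BorelRd R d -> \bar R).
  by apply/measurable_EFinP; exact: continuous_measurable_funRd.
have USpos : (0 < mu (U `&` S))%E.
  by rewrite measure_setI_msupport //; apply: Sx => //; rewrite /U /= /c; lra.
suff : (c%:E * mu (U `&` S) <= \int[mu]_(x in S) (h x)%:E)%E.
  have c0E : (0 < c%:E)%E by rewrite lte_fin.
  rewrite -(fineK (integrable_fin_num mS ih)) => /(lt_le_trans (mule_gt0 c0E USpos)).
  by rewrite lte_fin ltNge => /negP; apply.
rewrite -integral_cst //.
apply: (@le_trans _ _ (\int[mu]_(y in U `&` S) (h y)%:E)%E).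
- apply: ge0_le_integral => //.
  + by move=> y _; rewrite lee_fin ltW.
  + exact: measurable_funS mh.
  + by move=> y [Uy _]; rewrite lee_fin ltW.
- apply: ge0_subset_integral => //.
  exact: measurable_funS mh.
Qed.

End msupport_integral.

Section isotropic_support.
Variables (R : realType) (d : nat) (mu : probability (BorelRd R d) R).
Hypotheses (mu_sphere : mu (sphere (R:=R) (d:=d)) = 1%E) (mu_iso : isotropic mu).
Local Notation S := (msupport mu : set (BorelRd R d)).
Local Notation Ex f := (\int[mu]_(z in S) f z).

Lemma msupport_sphere : msupport mu `<=` sphere (R:=R) (d:=d).
Proof. exact: msupport_sub_closed (@closed_sphere R d) mu_sphere. Qed.

Lemma integrable_msupport (f : 'rV[R]_d -> R) : continuous f -> mu.-integrable S (EFin \o f).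
Proof.
apply: continuous_compact_integrableRd.
exact: subclosed_compact _ _ (@closed_msupport R d mu) (@compact_sphere R d) msupport_sphere.
Qed.

Lemma Rintegral_msupport_cst (c : R) : Ex (fun=> c) = c.
Proof.
rewrite Rintegral_cst; last exact: measurable_msupport.
by rewrite [fine _](_ : _ = 1) ?mulr1 //; exact: (congr1 fine (measure_msupport mu)).
Qed.

Definition mean : 'rV[R]_d := \row_i Ex (fun z : 'rV[R]_d => z 0 i).

Lemma Rintegral_dotv_mean (v : 'rV[R]_d) : Ex (fun z => dotv z v) = dotv mean v.
Proof.
have mS := measurable_msupport mu.
have icoord i : mu.-integrable S (EFin \o (fun z : 'rV[R]_d => z 0 i)).
  by apply: integrable_msupport; exact: coord_continuous.
under eq_Rintegral do rewrite dotvE.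
rewrite Rintegral_sum //; last first.
  by move=> i; apply: eq_integrable (integrableZr mS (v 0 i) (icoord i)).
by rewrite dotvE; apply: eq_bigr => i _; rewrite mxE RintegralZr.
Qed.

Lemma Rintegral_dotv_sqr (v : 'rV[R]_d) : Ex (fun z => dotv z v ^+ 2) = dotv v v / d%:R.
Proof.
have mS := measurable_msupport mu.
have [->|v0] := eqVneq v 0.
  under eq_Rintegral do rewrite -(scale0r 0) dotvZr mul0r expr0n.
  by rewrite Rintegral_msupport_cst -(scale0r 0) dotvZl !mul0r.
have vv0 : 0 < dotv v v by rewrite lt_def dotvv_eq0 v0 dotvv_ge0.
pose s := Num.sqrt (dotv v v); have s0 : 0 < s by rewrite sqrtr_gt0.
have ss : s ^+ 2 = dotv v v by rewrite sqr_sqrtr // ltW.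
have vE : v = s *: (s^-1 *: v) by rewrite scalerA divff ?gt_eqF // scale1r.
have y1 : sphere (s^-1 *: v).
  by rewrite /sphere /= dotvZl dotvZr -ss expr2 mulKf ?mulVf ?gt_eqF.
under eq_Rintegral do rewrite {1}vE dotvZr exprMn.
rewrite RintegralZl //; last first.
  exact/integrable_msupport/continuous_sqr/continuous_dotvl.
rewrite /Rintegral -integral_msupport; last first.
  by apply: continuous_sqr; exact: continuous_dotvl.
by rewrite mu_iso // ss.
Qed.

Lemma dotv_mean_le : dotv mean mean <= d%:R^-1.
Proof.
have mS := measurable_msupport mu.
set m := mean; set q := dotv m m.
have cf := continuous_dotvl (y := m); have c2 := continuous_sqr cf.
have cZ : continuous (fun z => 2 * q * dotv z m).
  exact: continuous_mul (cst_continuous (x := 2 * q)) cf.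
have i1 := integrable_msupport cf; have i2 := integrable_msupport c2.
have iZ := integrable_msupport cZ; have i2Z := integrable_msupport (continuous_sub c2 cZ).
have iq := integrable_msupport (cst_continuous (x := q ^+ 2)).
have : 0 <= Ex (fun z => (dotv z m - q) ^+ 2) by apply: Rintegral_ge0 => z _; exact: sqr_ge0.
have -> : Ex (fun z => (dotv z m - q) ^+ 2) =
    Ex (fun z => dotv z m ^+ 2 - 2 * q * dotv z m + q ^+ 2).
  by apply: eq_Rintegral => z _; ring.
rewrite RintegralD // RintegralB // RintegralZl // Rintegral_msupport_cst.
rewrite Rintegral_dotv_sqr Rintegral_dotv_mean -/q.
have q0 : 0 <= q := dotvv_ge0 m; have : 0 <= d%:R^-1 :> R by rewrite invr_ge0.
by move: (d%:R^-1) => a; nra.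
Qed.

Lemma msupport_Rintegral_le_eq (f g : 'rV[R]_d -> R) : continuous f -> continuous g ->
  (forall x, msupport mu x -> f x <= g x) -> Ex g <= Ex f ->
  forall x, msupport mu x -> f x = g x.
Proof.
move=> cf cg fg gf x Sx; apply/eqP; rewrite eq_sym -subr_eq0; apply/eqP.
have cgf := continuous_sub cg cf.
apply: (msupport_Rintegral_le0_eq0 cgf (integrable_msupport cgf)) => // [y Sy|].
  by rewrite subr_ge0 fg.
rewrite RintegralB ?subr_le0 //; first exact: measurable_msupport.
all: exact: integrable_msupport.
Qed.

Hypothesis mu_dotv_ge0 :
  forall x y : 'rV[R]_d, msupport mu x -> msupport mu y -> 0 <= dotv x y.

Lemma msupport_dotv_sqr_le (x y : 'rV[R]_d) :
  msupport mu x -> msupport mu y -> dotv x y ^+ 2 <= dotv x y.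
Proof.
move=> Sx Sy; have xy0 := mu_dotv_ge0 Sx Sy.
have xy1 := sphere_dotv_le1 (msupport_sphere Sx) (msupport_sphere Sy).
by rewrite expr2; nra.
Qed.

Lemma dotv_mean_msupport (x : 'rV[R]_d) : msupport mu x -> dotv x mean = d%:R^-1.
Proof.
move=> Sx; apply/esym.
apply: (msupport_Rintegral_le_eq (f := fun=> d%:R^-1) (g := fun z => dotv z mean) _ _ _ _ Sx).
- exact: cst_continuous.
- exact: continuous_dotvl.
- move=> y Sy; rewrite dotvC -Rintegral_dotv_mean.
  have <- : Ex (fun z => dotv z y ^+ 2) = d%:R^-1.
    by rewrite Rintegral_dotv_sqr (msupport_sphere Sy : dotv y y = 1) mul1r.
  apply: le_Rintegral => [||| z Sz]; last exact: msupport_dotv_sqr_le.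
  - exact: measurable_msupport.
  - exact/integrable_msupport/continuous_sqr/continuous_dotvl.
  - exact/integrable_msupport/continuous_dotvl.
- by rewrite Rintegral_msupport_cst Rintegral_dotv_mean; exact: dotv_mean_le.
Qed.

Lemma msupport_dotv_eq0 (x y : 'rV[R]_d) :
  msupport mu x -> msupport mu y -> x != y -> dotv x y = 0.
Proof.
move=> Sx Sy xy.
have : dotv x y ^+ 2 = dotv x y.
  apply: (msupport_Rintegral_le_eq
    (continuous_sqr (continuous_dotvl (y := y))) (continuous_dotvl (y := y)) _ _ Sx).
    by move=> z Sz; exact: msupport_dotv_sqr_le.
  rewrite Rintegral_dotv_mean Rintegral_dotv_sqr (msupport_sphere Sy : dotv y y = 1).
  by rewrite dotvC dotv_mean_msupport // mul1r.
move/eqP; rewrite expr2 -{3}[dotv x y]mulr1 -subr_eq0 -mulrBr mulf_eq0 subr_eq0.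
case/orP => /eqP // /(sphere_dotv_eq1 (msupport_sphere Sx) (msupport_sphere Sy)) xyE.
by move: xy; rewrite xyE eqxx.
Qed.

Lemma measure_msupport_set1 (x : 'rV[R]_d) : msupport mu x -> mu [set x] = (d%:R^-1)%:E.
Proof.
move=> Sx; have mS := measurable_msupport mu; have mx := finite_measurableRd (finite_set1 x).
have x1 : dotv x x = 1 := msupport_sphere Sx.
rewrite -[mu _]fineK ?fin_num_measure //; congr EFin.
transitivity (Ex (fun z => \1_[set x] z : R)).
  by rewrite /Rintegral integral_indic // setIidl // => _ ->.
transitivity (Ex (fun z => dotv z x ^+ 2)); last by rewrite Rintegral_dotv_sqr x1 mul1r.
apply: eq_Rintegral => z /[!inE] Sz; rewrite indicE.
have [->|zx] := eqVneq z x; first by rewrite mem_set // x1 expr1n.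
by rewrite msupport_dotv_eq0 // expr0n memNset //= => /eqP; rewrite (negPf zx).
Qed.

Lemma measure_range_msupport n (e : 'I_n -> 'rV[R]_d) :
  injective e -> range e `<=` msupport mu -> mu (range e) = (n%:R / d%:R)%:E.
Proof.
move=> ie eS; rewrite -[range e]setTI (measure_setI_range_atoms (c := d%:R^-1)) //.
- under eq_bigr do rewrite diracT mule1.
  by rewrite sumEFin sumr_const card_ord mulr_natl.
- by move=> i; apply: finite_measurableRd; exact: finite_set1.
- by move=> i; apply: measure_msupport_set1; apply: eS; exists i.
Qed.

Lemma msupport_enum : (0 < d)%N ->
  exists e : 'I_d -> 'rV[R]_d, injective e /\ range e = msupport mu.
Proof.
move=> d0; have d0R : 0 < d%:R :> R by rewrite ltr0n.
have finS : finite_set (msupport mu).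
  apply: contrapT => /(infinite_set_fset d.+1)[B BS dB].
  have [e [ie eB]] := fset_enum B.
  have := probability_le1 mu (finite_measurableRd (finite_fset B)).
  rewrite -eB measure_range_msupport ?eB // lee_fin ler_pdivrMr // mul1r ler_nat.
  by rewrite leqNgt dB.
have [B SB] := finite_fsetP.1 finS.
have [e [ie eB]] := fset_enum B.
move: #|` B| e ie eB => n e ie eB.
have : mu (range e) = 1%E by rewrite eB -SB measure_msupport.
rewrite measure_range_msupport // ?eB -?SB // => -[/(congr1 ( *%R^~ d%:R))].
rewrite divfK ?gt_eqF // mul1r => /eqP; rewrite eqr_nat => /eqP nd.
by subst n; exists e; rewrite eB -SB.
Qed.

End isotropic_support.

Theorem theorem5p1 (R : realType) (d : nat) (mu : probability (BorelRd R d) R) :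
  (0 < d)%N ->
  mu (sphere (R:=R) (d:=d)) = 1%E ->
  isotropic mu ->
  (forall x y : 'rV[R]_d, msupport mu x -> msupport mu y -> 0 <= dotv x y) ->
  exists e : 'I_d -> 'rV[R]_d,
    (forall i j : 'I_d, dotv (e i) (e j) = (i == j)%:R) /\
    (forall A : set (BorelRd R d), measurable A ->
       mu A = (\sum_(j < d) (d%:R^-1)%:E * \d_(e j : BorelRd R d) A)%E).
Proof.
move=> d0 mu_sphere mu_iso mu_dotv_ge0.
have [e [ie eS]] := msupport_enum mu_sphere mu_iso mu_dotv_ge0 d0.
have Se i : msupport mu (e i) by rewrite -eS; exists i.
exists e; split => [i j|A mA].
  have [<-|ij] := eqVneq i j; first exact: msupport_sphere (Se i).
  by rewrite (msupport_dotv_eq0 mu_sphere mu_iso mu_dotv_ge0) ?(inj_eq ie).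
rewrite -(measure_setI_msupport mu mA) -eS (measure_setI_range_atoms (c := d%:R^-1)) //.
- by move=> i; apply: finite_measurableRd; exact: finite_set1.
- by move=> i; exact: measure_msupport_set1.
Qed.
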